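(* Let $m \geq 1$ and let $d$ be a positive integer with $\gcd(d, 2^m-1)=1$. For $a \in \mathrm{GF}(2^m)$ define $$W_d(a) = \sum_{x \in \mathrm{GF}(2^m)} (-1)^{\mathrm{Tr}(x^d + a x)},$$ where $\mathrm{Tr}\colon \mathrm{GF}(2^m)\to\mathrm{GF}(2)$ is the absolute trace. Suppose that $W_d$ takes exactly three distinct values $A$, $B$, $C$ on $\mathrm{GF}(2^m)^*$, and let $N_C$ be the number of $a \in \mathrm{GF}(2^m)^*$ with $W_d(a) = C$. Let $V$ be the set of roots of $1 + x^d + (1+x)^d$ in $\mathrm{GF}(2^m)$. Then $$N_C = \frac{2^{2m} - 2^m(A+B) + (2^m-1)AB}{(C-A)(C-B)}$$ and $$2^{2m}|V| = 2^{2m}(A+B+C) - 2^m(AB+BC+CA) + (2^m-1)ABC.$$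
   Context: $W_d$ is the Walsh transform of the power map $x\mapsto x^d$ on $\mathrm{GF}(2^m)$. *)

From HB Require Import structures.
From mathcomp Require Import all_boot all_order all_algebra all_field.
Set Implicit Arguments. Unset Strict Implicit. Unset Printing Implicit Defensive.
Import Order.TTheory GRing.Theory Num.Theory.
Local Open Scope ring_scope.

(* Absolute trace GF(2^m) -> GF(2), with values in the prime subfield {0,1}
   of F: Tr(x) = x + x^2 + x^4 + ... + x^(2^(m-1)). *)
Definition abs_trace (F : finFieldType) (m : nat) (x : F) : F :=
  \sum_(i < m) x ^+ (2 ^ i).

Definition sgnTr (F : finFieldType) (m : nat) (y : F) : int :=
  if abs_trace m y == 0 then 1 else -1.

Definition walsh (F : finFieldType) (m d : nat) (a : F) : int :=
  \sum_(x : F) sgnTr m (x ^+ d + a * x).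

From HB Require Import structures.
From mathcomp Require Import all_boot all_order all_algebra all_field.
From mathcomp Require Import zify ring.
Set Implicit Arguments.
Unset Strict Implicit.
Unset Printing Implicit Defensive.
Import Order.TTheory GRing.Theory Num.Theory.
Local Open Scope ring_scope.

(* As x |-> x ^+ d permutes GF(2^m), W_d(0) = 0, and orthogonality of the additive
   character chi = (-1)^Tr gives the power moments
     sum_a W_d(a) = q,  sum_a W_d(a)^2 = q^2,  sum_a W_d(a)^3 = q^2 |V|.
   Since W_d takes only the values A, B, C on nonzero a, summing (W - A)(W - B) over
   all a counts N_C, while summing (W - A)(W - B)(W - C) gives -ABC; expanding both
   sums through the moments yields the two identities. *)

Lemma expr_gcdn_eq1 (R : pzSemiRingType) (x : R) (k n : nat) : (0 < n)%N ->
  x ^+ k = 1 -> x ^+ n = 1 -> x ^+ gcdn k n = 1.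
Proof.
move=> n_gt0 xk1 xn1; case: (egcdnP k n_gt0) => a b bezout _.
have := congr1 (GRing.exp x) bezout.
by rewrite gcdnC exprD (mulnC a) (mulnC b) !exprM xk1 xn1 !expr1n mul1r => <-.
Qed.

Lemma expf_card_unit (F : finFieldType) (x : F) : x != 0 -> x ^+ #|F|.-1 = 1.
Proof.
move=> x_neq0; apply: (mulIf x_neq0).
by rewrite mul1r -exprSr (ltn_predK (finNzRing_gt1 F)) expf_card.
Qed.

Lemma expf_inj_coprime (F : finFieldType) (d : nat) :
  (0 < d)%N -> coprime d #|F|.-1 -> injective (fun x : F => x ^+ d).
Proof.
move=> d_gt0 co_d x y /=.
have [-> xy|y_neq0 xy] := eqVneq y 0.
  by move/eqP: xy; rewrite expr0n gtn_eqF // expf_eq0 d_gt0 => /eqP.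
have x_neq0 : x != 0 by move: (expf_neq0 d y_neq0); rewrite -xy expf_eq0 d_gt0.
have : (x / y) ^+ gcdn d #|F|.-1 = 1.
  apply: expr_gcdn_eq1; first by rewrite -ltnS (ltn_predK (finNzRing_gt1 F)) finNzRing_gt1.
    by rewrite expr_div_n xy divff // expf_neq0.
  by rewrite expf_card_unit // mulf_neq0 ?invr_eq0.
by rewrite (eqP co_d) expr1 => /divr1_eq.
Qed.

Lemma sum_expf_coprime (F : finFieldType) (R : nmodType) (d : nat) (f : F -> R) :
  (0 < d)%N -> coprime d #|F|.-1 -> \sum_(x : F) f (x ^+ d) = \sum_(x : F) f x.
Proof.
by move=> d_gt0 co_d; rewrite [RHS](reindex_inj (expf_inj_coprime d_gt0 co_d)).
Qed.

Section AbsTrace.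
Variables (F : finFieldType) (m : nat).
Hypotheses (char2 : 2%N \in [pchar F]) (cardF : #|F| = (2 ^ m)%N) (m_gt0 : (0 < m)%N).

Local Notation Tr := (@abs_trace F m).
Local Notation chi := (@sgnTr F m).

Lemma exprD_pow2 (i : nat) (x y : F) :
  (x + y) ^+ (2 ^ i) = x ^+ (2 ^ i) + y ^+ (2 ^ i).
Proof.
by apply: exprDn_pchar; rewrite (eq_pnat _ (pcharf_eq char2)) pnatX pnat_id.
Qed.

Lemma abs_traceD (x y : F) : Tr (x + y) = Tr x + Tr y.
Proof. by rewrite /abs_trace -big_split; apply: eq_bigr => i _; rewrite exprD_pow2. Qed.

Lemma abs_trace0 : Tr 0 = 0.
Proof. by rewrite /abs_trace big1 // => i _; rewrite expr0n expn_eq0. Qed.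

(* The Frobenius map permutes the summands of Tr cyclically, since x ^+ 2 ^ m = x. *)
Lemma sqr_abs_trace (x : F) : Tr x ^+ 2 = Tr x.
Proof.
rewrite (big_morph (fun t : F => t ^+ 2) (exprD_pow2 1) (mul0r 0)).
under eq_bigr do rewrite -exprM -expnSr.
have := @big_ord_recr F 0 +%R m (fun i => x ^+ (2 ^ i)).
rewrite big_ord_recl /= -cardF expf_card expr1 [in RHS]addrC.
by move/addrI.
Qed.

Lemma abs_trace_eq01 (x : F) : (Tr x == 0) || (Tr x == 1).
Proof.
have : Tr x * (Tr x - 1) == 0 by rewrite mulrBr mulr1 -expr2 sqr_abs_trace subrr.
by rewrite mulf_eq0 subr_eq0.
Qed.

(* Tr is a nonzero polynomial of degree 2 ^ m.-1 < #|F|, so it cannot vanish on all of F. *)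
Lemma exists_abs_trace_neq0 : exists x : F, Tr x != 0.
Proof.
apply/existsP; apply: contraT; rewrite negb_exists => /forallP Tr0.
pose p : {poly F} := \sum_(i < m) 'X^(2 ^ i).
have p_neq0 : p != 0.
  apply/eqP => /(congr1 (coefp 1)); rewrite /= coef_sum coef0 (bigD1 (Ordinal m_gt0)) //=.
  rewrite coefXn eqxx big1 ?addr0; first by move/eqP; rewrite oner_eq0.
  move=> [[|i] lt_im] neq_i0; first by rewrite eqE /= in neq_i0.
  by rewrite coefXn /= expnS; case: eqP => // /(congr1 odd); rewrite oddM.
have p_roots : all (root p) (enum F).
  apply/allP => x _; move: (Tr0 x); rewrite negbK /root horner_sum.
  by under eq_bigr do rewrite hornerXn.
have := max_poly_roots p_neq0 (rs := enum F).
rewrite enum_uniq -cardE ltnNge => /(_ p_roots isT) /negP [].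
apply: (leq_trans (size_sum _ _ _)); apply/bigmax_leqP => i _.
by rewrite size_polyXn cardF ltn_exp2l.
Qed.

Lemma sgnTrD (x y : F) : chi (x + y) = chi x * chi y.
Proof.
rewrite /sgnTr abs_traceD.
case/orP: (abs_trace_eq01 x) => /eqP ->; case/orP: (abs_trace_eq01 y) => /eqP ->;
  by rewrite ?(addrr_pchar2 char2) ?addr0 ?add0r ?eqxx ?oner_eq0 ?mulrNN ?mulr1 ?mul1r.
Qed.

Lemma sgnTr0 : chi 0 = 1.
Proof. by rewrite /sgnTr abs_trace0 eqxx. Qed.

Lemma sgnTr_mul_self (x : F) : chi x * chi x = 1.
Proof. by rewrite -sgnTrD addrr_pchar2 // sgnTr0. Qed.

Lemma sum_sgnTr : \sum_(x : F) chi x = 0.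
Proof.
have [x0 Tr_x0] := exists_abs_trace_neq0.
have chi_x0 : chi x0 = -1 by rewrite /sgnTr (negbTE Tr_x0).
have : \sum_(x : F) chi x = - \sum_(x : F) chi x.
  rewrite {1}(reindex_inj (addIr x0)) -sumrN /=.
  by apply: eq_bigr => x _; rewrite sgnTrD chi_x0 mulrN1.
by move=> S_opp; lia.
Qed.

Lemma sum_sgnTr_scale (c : F) :
  \sum_(a : F) chi (a * c) = if c == 0 then (2 ^ m)%:Z else 0.
Proof.
have [->|c_neq0] := eqVneq c 0.
  by under eq_bigr do rewrite mulr0 sgnTr0; rewrite sumr_const cardF -natz pmulrn.
by rewrite -(reindex_inj (mulIf c_neq0) (P:=xpredT) (F:=chi)) sum_sgnTr.
Qed.

End AbsTrace.

Section Walsh.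
Variables (F : finFieldType) (m d : nat).
Hypotheses (char2 : 2%N \in [pchar F]) (cardF : #|F| = (2 ^ m)%N) (m_gt0 : (0 < m)%N).
Hypotheses (d_gt0 : (0 < d)%N) (co_d : coprime d #|F|.-1).

Local Notation chi := (@sgnTr F m).
Local Notation W := (@walsh F m d).
Local Notation q := (2 ^ m)%:Z.

Lemma walsh0 : W 0 = 0.
Proof.
rewrite /walsh; under eq_bigr do rewrite mul0r addr0.
by rewrite (sum_expf_coprime chi) // sum_sgnTr.
Qed.

Lemma sum_mul_walsh (g : F -> int) :
  \sum_a g a * W a = \sum_x chi (x ^+ d) * \sum_a g a * chi (a * x).
Proof.
rewrite /walsh; under eq_bigr do rewrite mulr_sumr.
rewrite exchange_big /=; apply: eq_bigr => x _; rewrite mulr_sumr.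
by apply: eq_bigr => a _; rewrite sgnTrD // mulrCA.
Qed.

Lemma sum_mul_sgnTr_shift (h : F -> int) (c : F) :
  \sum_x h x * \sum_a chi (a * (c + x)) = h c * q.
Proof.
under eq_bigr do rewrite sum_sgnTr_scale // addr_eq0 (oppr_pchar2 char2) eq_sym.
rewrite (bigD1 c) //= eqxx big1 ?addr0 // => x /negbTE ->.
exact: mulr0.
Qed.

Lemma walsh_inversion (c : F) : \sum_a W a * chi (a * c) = q * chi (c ^+ d).
Proof.
under eq_bigr do rewrite mulrC.
rewrite sum_mul_walsh; under eq_bigr do under eq_bigr do rewrite -sgnTrD // -mulrDr.
by rewrite sum_mul_sgnTr_shift mulrC.
Qed.

Lemma sum_walsh : \sum_a W a = q.
Proof.
have := walsh_inversion 0; rewrite expr0n gtn_eqF // sgnTr0 mulr1 => <-.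
by apply: eq_bigr => a _; rewrite mulr0 sgnTr0 mulr1.
Qed.

Lemma sum_walsh_sqr : \sum_a W a ^+ 2 = q ^+ 2.
Proof.
under eq_bigr do rewrite expr2.
rewrite sum_mul_walsh; under eq_bigr do rewrite walsh_inversion mulrCA sgnTr_mul_self // mulr1.
by rewrite sumr_const cardF -mulr_natr natz expr2.
Qed.

Lemma walsh_sqr_inversion (c : F) :
  \sum_a W a ^+ 2 * chi (a * c) = q * \sum_x chi (x ^+ d) * chi ((c + x) ^+ d).
Proof.
under eq_bigr do rewrite expr2 mulrAC.
rewrite sum_mul_walsh mulr_sumr; apply: eq_bigr => x _.
under eq_bigr do rewrite -mulrA -sgnTrD // -mulrDr.
by rewrite walsh_inversion mulrCA.
Qed.

(* Substituting x = t * y turns the inner sum into a character sum of y ^+ d * g t. *)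
Lemma sum_sgnTr_expD :
  \sum_y chi (y ^+ d) * \sum_x chi (x ^+ d) * chi ((y + x) ^+ d) =
  q * #|[set t : F | 1 + t ^+ d + (1 + t) ^+ d == 0]|%:Z.
Proof.
pose g (t : F) := 1 + t ^+ d + (1 + t) ^+ d.
have inner y : chi (y ^+ d) * \sum_x chi (x ^+ d) * chi ((y + x) ^+ d) =
               \sum_t chi (y ^+ d * g t).
  have [->|y_neq0] := eqVneq y 0.
    rewrite expr0n gtn_eqF // sgnTr0 mul1r; apply: eq_bigr => x _.
    by rewrite add0r mul0r sgnTr_mul_self // sgnTr0.
  rewrite (reindex_inj (mulIf y_neq0)) mulr_sumr; apply: eq_bigr => t _ /=.
  have -> : y + t * y = (1 + t) * y by rewrite mulrDl mul1r.
  by rewrite -!sgnTrD // !exprMn /g; congr chi; ring.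
under eq_bigr do rewrite inner.
rewrite exchange_big /=; under eq_bigr do rewrite (sum_expf_coprime (fun y => chi (y * g _))) //.
under eq_bigr do rewrite sum_sgnTr_scale //.
by rewrite -big_mkcond /= sumr_const -mulr_natr natz cardsE mulrC.
Qed.

Lemma sum_walsh_cube :
  \sum_a W a ^+ 3 = q ^+ 2 * #|[set t : F | 1 + t ^+ d + (1 + t) ^+ d == 0]|%:Z.
Proof.
under eq_bigr do rewrite exprSr.
rewrite sum_mul_walsh; under eq_bigr do rewrite walsh_sqr_inversion mulrCA.
by rewrite -mulr_sumr sum_sgnTr_expD mulrA -expr2.
Qed.
End Walsh.

Lemma sum_three_valued (I : finType) (T : eqType) (R : nmodType) (P : pred I)
    (w : I -> T) (A B C : T) (f : T -> R) :
  A != C -> B != C -> (forall i, P i -> [|| w i == A, w i == B | w i == C]) ->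
  f A = 0 -> f B = 0 ->
  \sum_(i | P i) f (w i) = f C *+ #|[set i | P i && (w i == C)]|.
Proof.
move=> neq_AC neq_BC w_vals fA fB.
rewrite (eq_bigr (fun i => if w i == C then f C else 0)); last first.
  by move=> i /w_vals /or3P[] /eqP ->; rewrite ?fA ?fB ?(negbTE neq_AC) ?(negbTE neq_BC) ?eqxx.
rewrite -big_mkcondr sumr_const; congr (_ *+ _).
by apply: eq_card => i; rewrite inE.
Qed.

Section PolynomialSums.
Variables (I : finType) (R : comPzRingType) (w : I -> R).

Lemma sum_quadratic (a b : R) :
  \sum_i (w i - a) * (w i - b) =
  \sum_i w i ^+ 2 - (a + b) * \sum_i w i + a * b *+ #|I|.
Proof.
rewrite (eq_bigr (fun i => w i ^+ 2 - (a + b) * w i + a * b)); last by move=> i _; ring.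
by rewrite big_split sumrB -mulr_sumr sumr_const.
Qed.

Lemma sum_cubic (a b c : R) :
  \sum_i (w i - a) * (w i - b) * (w i - c) =
  \sum_i w i ^+ 3 - (a + b + c) * \sum_i w i ^+ 2
    + (a * b + b * c + c * a) * \sum_i w i - a * b * c *+ #|I|.
Proof.
rewrite (eq_bigr (fun i => w i ^+ 3 - (a + b + c) * w i ^+ 2
                         + (a * b + b * c + c * a) * w i - a * b * c)); last by move=> i _; ring.
by rewrite sumrB sumr_const big_split sumrB -!mulr_sumr.
Qed.
End PolynomialSums.

Theorem proposition8 (F : finFieldType) (m d : nat) (A B C : int)
  (hchar : 2%N \in [pchar F]) (hcard : #|F| = (2 ^ m)%N) (hm : (1 <= m)%N)
  (hd : (0 < d)%N) (hcop : coprime d (2 ^ m - 1))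
  (hAB : A != B) (hBC : B != C) (hAC : A != C)
  (hvals : forall a : F, a != 0 ->
     [|| walsh m d a == A, walsh m d a == B | walsh m d a == C])
  (hA : exists2 a : F, a != 0 & walsh m d a = A)
  (hB : exists2 a : F, a != 0 & walsh m d a = B)
  (hC : exists2 a : F, a != 0 & walsh m d a = C) :
  let NC := #|[set a : F | (a != 0) && (walsh m d a == C)]| in
  let V := [set x : F | 1 + x ^+ d + (1 + x) ^+ d == 0] in
  let q : int := (2 ^ m)%:Z in
  (NC%:R : rat) =
    ((q ^+ 2 - q * (A + B) + (q - 1) * A * B)%:~R / ((C - A) * (C - B))%:~R)
  /\ q ^+ 2 * (#|V|%:Z) =
     q ^+ 2 * (A + B + C) - q * (A * B + B * C + C * A) + (q - 1) * A * B * C.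
Proof.
move=> NC V q.
have co_d : coprime d #|F|.-1 by rewrite hcard -subn1.
have sum_split (f : int -> int) : f A = 0 -> f B = 0 ->
    \sum_(a : F) f (walsh m d a) = f 0 + f C *+ NC.
  move=> fA fB; rewrite (bigD1 0) //= walsh0 //; congr (_ + _).
  exact: (sum_three_valued hAC hBC hvals fA fB).
have NC_eq : (C - A) * (C - B) * NC%:Z = q ^+ 2 - q * (A + B) + (q - 1) * A * B.
  have := sum_split (fun w => (w - A) * (w - B)).
  rewrite !subrr mul0r mulr0 => /(_ erefl erefl).
  rewrite sum_quadratic sum_walsh_sqr ?sum_walsh // !pmulrn !mulrzz hcard -/q.
  by move=> E; lia.
have V_eq : q ^+ 2 * #|V|%:Z =
    q ^+ 2 * (A + B + C) - q * (A * B + B * C + C * A) + (q - 1) * A * B * C.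
  have := sum_split (fun w => (w - A) * (w - B) * (w - C)).
  rewrite !subrr !(mul0r, mulr0) => /(_ erefl erefl).
  rewrite sum_cubic sum_walsh_cube ?sum_walsh_sqr ?sum_walsh // mul0rn addr0.
  by rewrite pmulrn mulrzz hcard -/q -/V => E; lia.
split; last exact: V_eq.
have CACB_neq0 : ((C - A) * (C - B))%:~R != 0 :> rat.
  by rewrite intr_eq0 mulf_neq0 // subr_eq0 eq_sym.
by rewrite -NC_eq intrM mulrAC divff // mul1r.
Qed.
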